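(* For $\tau,\kappa\in\mathbb{R}$ and integer $n\ge0$, let $$\mu_{2n}(\tau;\kappa)=\int_{-\infty}^{\infty}x^{2n}\exp\{-(x^6-\tau x^4+\kappa\tau^2x^2)\}\,dx.$$ Then $$\mu_{2n}(\tau;\kappa)=\tfrac13\sum_{j=0}^{\infty}\left\{\frac{\Gamma\left(\tfrac23j+\tfrac13n+\tfrac16\right)}{\left(\tfrac12\right)_j}\tau^jL_j^{(-1/2)}(\zeta)-\kappa\frac{\Gamma\left(\tfrac23j+\tfrac13n+\tfrac12\right)}{\left(\tfrac32\right)_j}\tau^{j+2}L_j^{(1/2)}(\zeta)\right\},$$ where $\zeta=-\tfrac14\kappa^2\tau^3$.
   Context: $L_j^{(\alpha)}$ denotes the (standard, generalised) Laguerre polynomial of degree $j$ and parameter $\alpha$. $(a)_j$ denotes the Pochhammer symbol. *)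

From Stdlib Require Import Reals Arith.
From Coquelicot Require Import Coquelicot.
Open Scope R_scope.

Fixpoint pochhammer (a : R) (j : nat) : R :=
  match j with
  | O => 1
  | S k => pochhammer a k * (a + INR k)
  end.

(* Generalised Laguerre polynomial:
   L_j^(alpha)(x) = sum_{i=0}^j (-1)^i binom(j+alpha, j-i) x^i / i!,
   with binom(j+alpha, j-i) = (alpha+i+1)_{j-i} / (j-i)!. *)
Definition laguerre (j : nat) (alpha x : R) : R :=
  sum_n (fun i => (-1) ^ i * pochhammer (alpha + INR i + 1) (j - i)
                  / (INR (Factorial.fact (j - i)) * INR (Factorial.fact i)) * x ^ i) j.

Definition Gamma (s : R) : R :=
  RInt_gen (fun t => Rpower t (s - 1) * exp (- t))
           (at_right 0) (Rbar_locally p_infty).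

Definition mu_integrand (n : nat) (tau kappa x : R) : R :=
  x ^ (2 * n) * exp (- (x ^ 6 - tau * x ^ 4 + kappa * tau ^ 2 * x ^ 2)).

Definition mu_term (n : nat) (tau kappa : R) (j : nat) : R :=
  let zeta := - (1 / 4) * kappa ^ 2 * tau ^ 3 in
  Gamma (2 / 3 * INR j + 1 / 3 * INR n + 1 / 6) / pochhammer (1 / 2) j
    * tau ^ j * laguerre j (- (1 / 2)) zeta
  - kappa * (Gamma (2 / 3 * INR j + 1 / 3 * INR n + 1 / 2) / pochhammer (3 / 2) j)
    * tau ^ (j + 2) * laguerre j (1 / 2) zeta.

From Stdlib Require Import Reals Factorial Lra Lia Classical.
From Coquelicot Require Import Coquelicot.
Open Scope R_scope.

(** Write the integrand as [x^(2n) e^(-x^6) e^y e^z] with [y = tau x^4] and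
    [z = - kappa tau^2 x^2], and expand [e^y e^z] as the double series of
    [y^a z^b / (a! b!)]. Grouping this series by [j = a + floor(b/2)], the [j]-th group is
    a combination of [x^(2n+4j)] and [x^(2n+4j+2)]; by the explicit formula for
    [L_j^(alpha)] together with [(2i)! = 4^i i! (1/2)_i] and [(2i+1)! = 4^i i! (3/2)_i],
    its two coefficients are exactly the Laguerre coefficients of the [j]-th term.
    Integrating termwise with [int x^(2m) e^(-x^6) dx = Gamma((2m+1)/6)/3]
    (substitute [t = x^6]) turns the [j]-th group into the [j]-th term divided by [3].
    Termwise integration is justified by a geometric bound: writing
    [|s|^k/k! = 2^(-k) (2|s|)^k/k!], the sum of the groups up to [J] differs from [e^y e^z]
    by at most [3 2^(-J) e^(2|y|+2|z|)], and [x^(2n) e^(-x^6 + 2|tau| x^4 + 2|kappa| tau^2 x^2)]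
    is integrable on the line. *)

(** * The exponential series *)

Definition exp_term (k : nat) (s : R) : R := s ^ k / INR (fact k).

Lemma INR_fact_pos (k : nat) : 0 < INR (fact k).
Proof. apply lt_0_INR, lt_O_fact. Qed.

Lemma exp_term_nonneg (k : nat) (s : R) : 0 <= s -> 0 <= exp_term k s.
Proof.
  intros Hs. unfold exp_term. apply Rdiv_le_0_compat; [now apply pow_le | apply INR_fact_pos].
Qed.

Lemma is_series_exp_term (s : R) : is_series (fun k => exp_term k s) (exp s).
Proof.
  eapply is_series_ext; [| apply (is_exp_Reals s)].
  intros k. unfold exp_term. rewrite pow_n_pow. unfold scal; simpl; unfold mult; simpl.
  unfold Rdiv. ring.
Qed.

Lemma sum_f_R0_le_is_series (a : nat -> R) (l : R) (N : nat) :
  (forall k, 0 <= a k) -> is_series a l -> sum_f_R0 a N <= l.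
Proof.
  intros Ha Hl. rewrite <- sum_n_Reals.
  apply (is_lim_seq_incr_compare (sum_n a)); [exact Hl |].
  intros k. rewrite !sum_n_Reals, tech5. specialize (Ha (S k)). lra.
Qed.

Lemma is_series_Rabs_le (a b : nat -> R) (la lb : R) :
  is_series a la -> is_series b lb -> (forall k, Rabs (a k) <= b k) -> Rabs la <= lb.
Proof.
  intros Ha Hb Hab.
  assert (Habs : ex_series (fun k => Rabs (a k))).
  { apply (ex_series_le (V := R_CompleteNormedModule) _ b); [| now exists lb].
    intros k. unfold norm; simpl. rewrite Rabs_Rabsolu. apply Hab. }
  rewrite <- (is_series_unique _ _ Ha), <- (is_series_unique _ _ Hb).
  eapply Rle_trans; [now apply Series_Rabs |].
  apply Series_le; [| now exists lb].
  intros k. split; [apply Rabs_pos | apply Hab].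
Qed.

Lemma exp_term_le_exp (k : nat) (s : R) : 0 <= s -> exp_term k s <= exp s.
Proof.
  intros Hs. apply Rle_trans with (sum_f_R0 (fun i => exp_term i s) k).
  - destruct k as [| k]; simpl; [lra |].
    assert (0 <= sum_f_R0 (fun i => exp_term i s) k)
      by (apply cond_pos_sum; intros; now apply exp_term_nonneg).
    lra.
  - apply sum_f_R0_le_is_series; [intros; now apply exp_term_nonneg | apply is_series_exp_term].
Qed.

Lemma exp_le_mono (x y : R) : x <= y -> exp x <= exp y.
Proof. intros [H | ->]; [now left; apply exp_increasing | lra]. Qed.

Lemma half_pow_le (k m : nat) : (k <= m)%nat -> (1/2) ^ m <= (1/2) ^ k.
Proof.
  intros H. induction H as [| m _ IH]; [lra |].
  simpl. assert (0 <= (1/2) ^ m) by (apply pow_le; lra). lra.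
Qed.

Lemma sum_half_pow_le (J : nat) : sum_f_R0 (fun i => (1/2) ^ i) J <= 2.
Proof.
  rewrite tech3 by lra. assert (0 <= (1/2) ^ S J) by (apply pow_le; lra).
  apply Rmult_le_reg_r with (1 - 1/2); [lra |]. unfold Rdiv at 1. rewrite Rmult_assoc, Rinv_l; lra.
Qed.

Lemma is_lim_seq_half_pow_mult (C : R) : is_lim_seq (fun J => (1/2) ^ J * C) 0.
Proof.
  replace 0 with (0 * C) by ring.
  apply (is_lim_seq_mult' _ (fun _ => C)); [| apply is_lim_seq_const].
  apply is_lim_seq_geom. rewrite Rabs_right; lra.
Qed.

Lemma Rabs_exp_term (k : nat) (s : R) :
  Rabs (exp_term k s) = (1/2) ^ k * exp_term k (2 * Rabs s).
Proof.
  unfold exp_term. rewrite Rabs_div, <- RPow_abs, (Rabs_right (INR _))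
    by (apply Rle_ge, pos_INR || apply not_0_INR, fact_neq_0).
  rewrite Rpow_mult_distr.
  replace ((1/2) ^ k * (2 ^ k * Rabs s ^ k / INR (fact k)))
    with ((1/2 * 2) ^ k * Rabs s ^ k / INR (fact k))
    by (rewrite Rpow_mult_distr; unfold Rdiv; ring).
  replace (1/2 * 2) with 1 by field. now rewrite pow1, Rmult_1_l.
Qed.

Definition exp_tail (K : nat) (s : R) : R := exp s - sum_f_R0 (fun k => exp_term k s) K.

Lemma is_series_exp_tail (K : nat) (s : R) :
  is_series (fun k => exp_term (S K + k) s) (exp_tail K s).
Proof.
  apply (is_series_incr_n (fun k => exp_term k s)); [lia |].
  rewrite sum_n_Reals. simpl. unfold plus; simpl. unfold exp_tail.
  replace (exp s - sum_f_R0 (fun k => exp_term k s) K + sum_f_R0 (fun k => exp_term k s) K)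
    with (exp s) by ring.
  apply is_series_exp_term.
Qed.

Lemma Rabs_exp_tail_le (K : nat) (s : R) :
  Rabs (exp_tail K s) <= (1/2) ^ S K * exp (2 * Rabs s).
Proof.
  set (t := 2 * Rabs s).
  assert (Ht : 0 <= t) by (unfold t; pose proof (Rabs_pos s); lra).
  eapply Rle_trans.
  { apply (is_series_Rabs_le _ (fun k => (1/2) ^ S K * exp_term (S K + k) t) _ _
             (is_series_exp_tail K s)).
    - apply (is_series_scal_l (V := R_NormedModule)), is_series_exp_tail.
    - intros k. rewrite Rabs_exp_term. apply Rmult_le_compat_r; [now apply exp_term_nonneg |].
      apply half_pow_le. lia. }
  apply Rmult_le_compat_l; [apply pow_le; lra |]. unfold exp_tail.
  assert (0 <= sum_f_R0 (fun k => exp_term k t) K)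
    by (apply cond_pos_sum; intros; now apply exp_term_nonneg).
  lra.
Qed.

(** * Regrouping the product of two exponential series *)

Definition exp_pair (i : nat) (z : R) : R := exp_term (2 * i) z + exp_term (2 * i + 1) z.

Definition exp_prod_term (j : nat) (y z : R) : R :=
  sum_f_R0 (fun i => exp_term (j - i) y * exp_pair i z) j.

Lemma sum_exp_pair (J : nat) (z : R) :
  sum_f_R0 (fun i => exp_pair i z) J = sum_f_R0 (fun k => exp_term k z) (2 * J + 1).
Proof.
  unfold exp_pair. induction J as [| J IH]; [reflexivity |].
  replace (2 * S J + 1)%nat with (S (S (2 * J + 1))) by lia.
  rewrite !tech5, IH.
  replace (S (2 * J + 1)) with (2 * S J)%nat by lia.
  replace (S (2 * S J)) with (2 * S J + 1)%nat by lia. ring.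
Qed.

Lemma Rabs_exp_pair_le (i : nat) (z : R) :
  Rabs (exp_pair i z) <= 2 * (1/2) ^ (2 * i) * exp (2 * Rabs z).
Proof.
  assert (Hz : 0 <= 2 * Rabs z) by (pose proof (Rabs_pos z); lra).
  assert (Hle : forall k, (2 * i <= k)%nat ->
                  Rabs (exp_term k z) <= (1/2) ^ (2 * i) * exp (2 * Rabs z)).
  { intros k Hk. rewrite Rabs_exp_term.
    apply Rmult_le_compat; [apply pow_le; lra | now apply exp_term_nonneg |
                            now apply half_pow_le | now apply exp_term_le_exp]. }
  unfold exp_pair. eapply Rle_trans; [apply Rabs_triang |].
  pose proof (Hle (2 * i)%nat (le_n _)). pose proof (Hle (2 * i + 1)%nat ltac:(lia)). lra.
Qed.

Lemma sum_exp_prod_term (J : nat) (y z : R) :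
  sum_f_R0 (fun j => exp_prod_term j y z) J =
  sum_f_R0 (fun i => exp_pair i z * sum_f_R0 (fun k => exp_term k y) (J - i)) J.
Proof.
  induction J as [| J IH]; [unfold exp_prod_term; simpl; ring |].
  rewrite !tech5, IH. unfold exp_prod_term at 1.
  rewrite tech5, Nat.sub_diag.
  assert (E : sum_f_R0 (fun i => exp_pair i z * sum_f_R0 (fun k => exp_term k y) (S J - i)) J =
              sum_f_R0 (fun i => exp_pair i z * sum_f_R0 (fun k => exp_term k y) (J - i)) J
              + sum_f_R0 (fun i => exp_term (S J - i) y * exp_pair i z) J).
  { rewrite <- plus_sum. apply sum_eq. intros i Hi.
    replace (S J - i)%nat with (S (J - i)) by lia. rewrite tech5. ring. }
  rewrite E. change (sum_f_R0 (fun k => exp_term k y) 0) with (exp_term 0 y). ring.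
Qed.

Lemma exp_prod_remainder (J : nat) (y z : R) :
  exp y * exp z - sum_f_R0 (fun j => exp_prod_term j y z) J =
  sum_f_R0 (fun i => exp_pair i z * exp_tail (J - i) y) J + exp y * exp_tail (2 * J + 1) z.
Proof.
  unfold exp_tail. rewrite sum_exp_prod_term, <- sum_exp_pair.
  assert (H : sum_f_R0 (fun i => exp_pair i z
                                  * (exp y - sum_f_R0 (fun k => exp_term k y) (J - i))) J =
              exp y * sum_f_R0 (fun i => exp_pair i z) J
              - sum_f_R0 (fun i => exp_pair i z * sum_f_R0 (fun k => exp_term k y) (J - i)) J)
    by (rewrite scal_sum, <- minus_sum; apply sum_eq; intros; ring).
  rewrite H. ring.
Qed.

Lemma exp_prod_error (J : nat) (y z : R) :
  Rabs (exp y * exp z - sum_f_R0 (fun j => exp_prod_term j y z) J)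
  <= 3 * (1/2) ^ J * exp (2 * Rabs y + 2 * Rabs z).
Proof.
  set (E := exp (2 * Rabs y + 2 * Rabs z)).
  assert (HE : E = exp (2 * Rabs y) * exp (2 * Rabs z)) by apply exp_plus.
  assert (HE_pos : 0 <= (1/2) ^ J * E)
    by (apply Rmult_le_pos; [apply pow_le; lra | left; apply exp_pos]).
  assert (Hy : forall i, (i <= J)%nat ->
                 Rabs (exp_pair i z * exp_tail (J - i) y) <= (1/2) ^ i * ((1/2) ^ J * E)).
  { intros i Hi. rewrite Rabs_mult.
    eapply Rle_trans.
    { apply Rmult_le_compat; [apply Rabs_pos | apply Rabs_pos |
                              apply Rabs_exp_pair_le | apply Rabs_exp_tail_le]. }
    assert (Hpow : (1/2) ^ i * (1/2) ^ J = 2 * ((1/2) ^ (2 * i) * (1/2) ^ S (J - i))).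
    { rewrite <- !pow_add. replace (2 * i + S (J - i))%nat with (S (i + J)) by lia.
      simpl. field. }
    right. replace ((1/2) ^ i * ((1/2) ^ J * E)) with ((1/2) ^ i * (1/2) ^ J * E) by ring.
    rewrite Hpow, HE. ring. }
  assert (Hz : Rabs (exp y * exp_tail (2 * J + 1) z) <= (1/2) ^ J * E).
  { rewrite Rabs_mult, HE.
    replace ((1/2) ^ J * (exp (2 * Rabs y) * exp (2 * Rabs z)))
      with (exp (2 * Rabs y) * ((1/2) ^ J * exp (2 * Rabs z))) by ring.
    apply Rmult_le_compat; [apply Rabs_pos | apply Rabs_pos | |].
    - rewrite Rabs_right by (left; apply exp_pos). apply exp_le_mono.
      pose proof (Rle_abs y). pose proof (Rabs_pos y). lra.
    - eapply Rle_trans; [apply Rabs_exp_tail_le |].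
      apply Rmult_le_compat_r; [left; apply exp_pos | apply half_pow_le; lia]. }
  rewrite exp_prod_remainder. eapply Rle_trans; [apply Rabs_triang |].
  enough (Rabs (sum_f_R0 (fun i => exp_pair i z * exp_tail (J - i) y) J) <= 2 * ((1/2) ^ J * E))
    by lra.
  eapply Rle_trans; [apply sum_f_R0_triangle |].
  eapply Rle_trans; [apply sum_Rle, Hy |].
  rewrite <- scal_sum, Rmult_comm. apply Rmult_le_compat_r; [exact HE_pos | apply sum_half_pow_le].
Qed.

(** * Integrable majorants *)

Lemma cubic_le (A B t : R) : 0 <= A -> 0 <= B -> 0 <= t ->
  - t ^ 3 + A * t ^ 2 + B * t <= A * (A + B + 1) ^ 2 + B * (A + B + 1).
Proof.
  intros HA HB Ht. set (T := A + B + 1).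
  destruct (Rle_lt_dec t T) as [HtT | HtT].
  - assert (A * t ^ 2 <= A * T ^ 2) by (apply Rmult_le_compat_l, pow_incr; lra).
    assert (B * t <= B * T) by (apply Rmult_le_compat_l; lra).
    assert (0 <= t ^ 3) by (now apply pow_le).
    lra.
  - assert (A * T ^ 2 + B * T >= 0) by (unfold T; nra).
    assert (t ^ 3 >= T * t ^ 2) by (simpl; nra).
    assert (t ^ 2 >= t) by (simpl; unfold T in HtT; nra).
    unfold T in *. nra.
Qed.

Lemma poly_exp_decay (n : nat) (A B : R) : 0 <= A -> 0 <= B ->
  exists K, 0 <= K /\
    forall x, (1 + x ^ 2) * (x ^ (2 * n) * exp (- x ^ 6 + A * x ^ 4 + B * x ^ 2)) <= K.
Proof.
  intros HA HB. set (C := A * (A + (B + 1) + 1) ^ 2 + (B + 1) * (A + (B + 1) + 1)).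
  exists (INR (fact (S n)) * exp (C + 1)). split.
  { apply Rmult_le_pos; [apply pos_INR | left; apply exp_pos]. }
  intros x. set (t := x ^ 2).
  assert (Ht : 0 <= t) by apply pow2_ge_0.
  replace (x ^ (2 * n)) with (t ^ n) by (unfold t; now rewrite pow_mult).
  replace (x ^ 6) with (t ^ 3) by (unfold t; now rewrite <- pow_mult).
  replace (x ^ 4) with (t ^ 2) by (unfold t; now rewrite <- pow_mult).
  assert (Hpoly : (1 + t) * t ^ n <= INR (fact (S n)) * exp (1 + t)).
  { assert ((1 + t) * t ^ n <= (1 + t) ^ S n) by (apply Rmult_le_compat_l, pow_incr; lra).
    pose proof (exp_term_le_exp (S n) (1 + t) ltac:(lra)) as Hexp. unfold exp_term in Hexp.
    pose proof (INR_fact_pos (S n)).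
    apply Rmult_le_compat_l with (r := INR (fact (S n))) in Hexp; [| lra].
    field_simplify in Hexp; lra. }
  assert (Hexp : exp (1 + t) * exp (- t ^ 3 + A * t ^ 2 + B * t) <= exp (C + 1)).
  { rewrite <- exp_plus. apply exp_le_mono.
    pose proof (cubic_le A (B + 1) t HA ltac:(lra) Ht). unfold C. lra. }
  pose proof (exp_pos (- t ^ 3 + A * t ^ 2 + B * t)).
  pose proof (exp_pos (1 + t)). pose proof (INR_fact_pos (S n)).
  assert (0 <= t ^ n) by (now apply pow_le).
  nra.
Qed.

Lemma continuous_of_ex_derive (f : R -> R) (x : R) : ex_derive f x -> continuous f x.
Proof. apply (ex_derive_continuous (V := R_NormedModule)). Qed.

Lemma ex_RInt_of_continuous (f : R -> R) (a b : R) : (forall x, continuous f x) -> ex_RInt f a b.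
Proof. intros Hf. apply (ex_RInt_continuous (V := R_CompleteNormedModule)). intros; apply Hf. Qed.

Lemma continuous_sum_f_R0 (u : nat -> R -> R) (J : nat) (x : R) :
  (forall j, continuous (u j) x) -> continuous (fun y => sum_f_R0 (fun j => u j y) J) x.
Proof.
  intros Hu. induction J as [| J IH]; [apply Hu |].
  exact (continuous_plus (V := R_NormedModule) _ _ _ IH (Hu (S J))).
Qed.

Lemma continuous_affine (a c v : R) : continuous (fun u => a * (u - c)) v.
Proof. apply continuous_of_ex_derive. auto_derive. exact I. Qed.

Lemma is_RInt_atan (a b : R) : is_RInt (fun x => / (1 + x ^ 2)) a b (atan b - atan a).
Proof.
  apply (is_RInt_derive atan).
  - intros x _. apply is_derive_Reals, derivable_pt_lim_atan.
  - intros x _. apply continuous_of_ex_derive. auto_derive.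
    pose proof (pow2_ge_0 x). simpl in *. lra.
Qed.

Lemma RInt_le_of_decay (h : R -> R) (K a b : R) :
  a <= b -> 0 <= K -> (forall x, continuous h x) -> (forall x, (1 + x ^ 2) * h x <= K) ->
  RInt h a b <= K * PI.
Proof.
  intros Hab HK Hh Hdecay.
  assert (Hpos : forall x, 0 < 1 + x ^ 2) by (intros x; pose proof (pow2_ge_0 x); lra).
  assert (Hint : is_RInt (fun x => K * / (1 + x ^ 2)) a b (K * (atan b - atan a)))
    by apply (is_RInt_scal (V := R_NormedModule) _ _ _ K _ (is_RInt_atan a b)).
  apply Rle_trans with (K * (atan b - atan a)).
  - rewrite <- (is_RInt_unique _ _ _ _ Hint).
    apply RInt_le; [exact Hab | now apply ex_RInt_of_continuous |
                    now exists (K * (atan b - atan a)) |].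
    intros x _. specialize (Hpos x). specialize (Hdecay x).
    apply Rmult_le_reg_l with (1 + x ^ 2); [exact Hpos |].
    field_simplify; lra.
  - apply Rmult_le_compat_l; [exact HK |].
    pose proof (atan_bound a). pose proof (atan_bound b). lra.
Qed.

(** * Improper integrals *)

Lemma is_RInt_gen_at_point_l (f : R -> R) (F : (R -> Prop) -> Prop) (c l : R) :
  Filter F -> F (fun b => ex_RInt f c b) ->
  filterlim (fun b => RInt f c b) F (locally l) -> is_RInt_gen f (at_point c) F l.
Proof.
  intros FF Hex Hlim.
  apply (filterlimi_lim_ext_loc (fun ab => RInt f c (snd ab))).
  - apply Filter_prod with (Q := fun a => a = c) (R := fun b => ex_RInt f c b);
      [reflexivity | exact Hex |].
    intros a b -> Hb. simpl. now apply (RInt_correct (V := R_CompleteNormedModule)).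
  - apply (filterlim_comp _ _ _ snd (fun b => RInt f c b) _ F); [apply filterlim_snd | exact Hlim].
Qed.

Lemma is_RInt_gen_sum_f_R0 (u : nat -> R -> R) (l : nat -> R) (Fa Fb : (R -> Prop) -> Prop)
  {FFa : Filter Fa} {FFb : Filter Fb} (J : nat) :
  (forall j, is_RInt_gen (u j) Fa Fb (l j)) ->
  is_RInt_gen (fun x => sum_f_R0 (fun j => u j x) J) Fa Fb (sum_f_R0 l J).
Proof.
  intros Hu. induction J as [| J IH]; [apply Hu |].
  exact (is_RInt_gen_plus _ _ _ _ IH (Hu (S J))).
Qed.

Lemma filter_prod_m_infty_p_infty_le :
  filter_prod (Rbar_locally m_infty) (Rbar_locally p_infty) (fun ab => fst ab <= snd ab).
Proof.
  apply Filter_prod with (Q := fun a => a < 0) (R := fun b => 0 < b);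
    [now exists 0 | now exists 0 |].
  simpl. intros; lra.
Qed.

Lemma nondecreasing_bounded_limit (F : R -> R) (M : R) :
  (forall x y, x <= y -> F x <= F y) -> (forall x, F x <= M) ->
  exists L, filterlim F (Rbar_locally p_infty) (locally L).
Proof.
  intros Hmono Hbound.
  destruct (completeness (fun y => exists x, y = F x)) as [L [HL_ub HL_least]].
  { exists M. intros y [x ->]. apply Hbound. }
  { exists (F 0), 0. reflexivity. }
  exists L. apply filterlim_locally. intros eps.
  assert (Hx0 : exists x0, L - eps < F x0).
  { apply not_all_not_ex. intros Hnot.
    assert (L <= L - eps) by (apply HL_least; intros y [x ->]; specialize (Hnot x); lra).
    pose proof (cond_pos eps). lra. }
  destruct Hx0 as [x0 Hx0]. exists x0. intros x Hx.
  assert (F x0 <= F x) by (apply Hmono; lra).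
  assert (F x <= L) by (apply HL_ub; now exists x).
  change (Rabs (F x - L) < eps). apply Rabs_def1; lra.
Qed.

Section ImproperIntegralApprox.

Context {Fa Fb : (R -> Prop) -> Prop} {FFa : ProperFilter Fa} {FFb : ProperFilter Fb}.

Variables (f : R -> R) (g : nat -> R -> R) (I e : nat -> R).

Hypothesis ex_RInt_f : forall a b, ex_RInt f a b.
Hypothesis is_RInt_gen_g : forall J, is_RInt_gen (g J) Fa Fb (I J).
Hypothesis e_lim : is_lim_seq e 0.
Hypothesis RInt_f_g : forall J a b, a <= b -> Rabs (RInt f a b - RInt (g J) a b) <= e J.
Hypothesis ordered : filter_prod Fa Fb (fun ab => fst ab <= snd ab).

Lemma RInt_near_approx_integral (J : nat) (eps : posreal) :
  filter_prod Fa Fb (fun ab => Rabs (RInt f (fst ab) (snd ab) - I J) < e J + eps).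
Proof.
  assert (Hg := proj1 (filterlimi_locally _ _) (is_RInt_gen_g J) eps).
  apply (filter_imp _ _ ) with (2 := filter_and _ _ Hg ordered).
  intros [a b] [[v [Hv Hball]] Hab]. simpl in *.
  rewrite <- (is_RInt_unique _ _ _ _ Hv) in Hball.
  change (Rabs (RInt (g J) a b - I J) < eps) in Hball.
  specialize (RInt_f_g J a b Hab).
  replace (RInt f a b - I J) with ((RInt f a b - RInt (g J) a b) + (RInt (g J) a b - I J)) by ring.
  eapply Rle_lt_trans; [apply Rabs_triang | lra].
Qed.

Lemma approx_integral_dist (J J' : nat) : Rabs (I J - I J') <= e J + e J'.
Proof.
  apply Rle_plus_epsilon. intros eps Heps.
  assert (Heps2 : 0 < eps / 2) by lra.
  destruct (Hierarchy.filter_ex _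
              (filter_and _ _ (RInt_near_approx_integral J (mkposreal _ Heps2))
                              (RInt_near_approx_integral J' (mkposreal _ Heps2))))
    as [[a b] [HJ HJ']].
  simpl in HJ, HJ'.
  replace (I J - I J') with (- (RInt f a b - I J) + (RInt f a b - I J')) by ring.
  eapply Rle_trans; [apply Rabs_triang |]. rewrite Rabs_Ropp. lra.
Qed.

Lemma is_RInt_gen_approx : exists l : R, is_lim_seq I l /\ is_RInt_gen f Fa Fb l.
Proof.
  assert (He := proj2 (is_lim_seq_spec e 0) e_lim). simpl in He.
  assert (Hcauchy : ex_lim_seq_cauchy I).
  { intros eps. assert (Heps2 : 0 < eps / 2) by (pose proof (cond_pos eps); lra).
    destruct (He (mkposreal _ Heps2)) as [N HN]. simpl in HN. exists N. intros p q Hp Hq.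
    pose proof (approx_integral_dist p q).
    specialize (HN p Hp) as Hep. specialize (HN q Hq) as Heq.
    rewrite Rminus_0_r in Hep, Heq. apply Rabs_def2 in Hep. apply Rabs_def2 in Heq. lra. }
  destruct (proj2 (ex_lim_seq_cauchy_corr I) Hcauchy) as [l Hl].
  exists l. split; [exact Hl |].
  apply (filterlimi_lim_ext_loc (fun ab => RInt f (fst ab) (snd ab))).
  { apply filter_forall. intros [a b].
    apply (RInt_correct (V := R_CompleteNormedModule)), ex_RInt_f. }
  apply filterlim_locally. intros eps.
  assert (Heps3 : 0 < eps / 3) by (pose proof (cond_pos eps); lra).
  destruct (He (mkposreal _ Heps3)) as [N1 HN1].
  destruct (proj2 (is_lim_seq_spec I l) Hl (mkposreal _ Heps3)) as [N2 HN2].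
  set (J := max N1 N2).
  specialize (HN1 J (Nat.le_max_l _ _)). specialize (HN2 J (Nat.le_max_r _ _)). simpl in HN1, HN2.
  rewrite Rminus_0_r in HN1. apply Rabs_def2 in HN1.
  apply (filter_imp _ _) with (2 := RInt_near_approx_integral J (mkposreal _ Heps3)).
  intros [a b] Hab. simpl in Hab |- *. change (Rabs (RInt f a b - l) < eps).
  replace (RInt f a b - l) with ((RInt f a b - I J) + (I J - l)) by ring.
  eapply Rle_lt_trans; [apply Rabs_triang | lra].
Qed.

End ImproperIntegralApprox.

(** * Moments of [exp (- x^6)] *)

(* Only meaningful for [0 < t]: [Rpower t a] is [exp (a * ln t)] and [ln] is junk on [t <= 0]. *)
Definition nth_root (n : nat) (t : R) : R := Rpower t (/ INR n).

Lemma nth_root_pos (n : nat) (t : R) : 0 < nth_root n t.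
Proof. apply exp_pos. Qed.

Lemma nth_root_pow (n : nat) (t : R) : (0 < n)%nat -> 0 < t -> nth_root n t ^ n = t.
Proof.
  intros Hn Ht. unfold nth_root.
  rewrite <- Rpower_pow by apply exp_pos. rewrite Rpower_mult, Rinv_l by (apply not_0_INR; lia).
  now apply Rpower_1.
Qed.

Lemma nth_root_of_pow (n : nat) (y : R) : (0 < n)%nat -> 0 < y -> nth_root n (y ^ n) = y.
Proof.
  intros Hn Hy. unfold nth_root.
  rewrite <- Rpower_pow by exact Hy. rewrite Rpower_mult, Rinv_r by (apply not_0_INR; lia).
  now apply Rpower_1.
Qed.

Lemma nth_root_lt (n : nat) (s t : R) : (0 < n)%nat -> 0 < s < t -> nth_root n s < nth_root n t.
Proof.
  intros Hn Hst. apply Rlt_Rpower_l; [| exact Hst].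
  apply Rinv_0_lt_compat, lt_0_INR. exact Hn.
Qed.

Lemma nth_root_at_right_0 (n : nat) :
  (0 < n)%nat -> filterlim (nth_root n) (at_right 0) (locally 0).
Proof.
  intros Hn. apply filterlim_locally. intros eps.
  assert (Hpow : 0 < eps ^ n) by (apply pow_lt, cond_pos).
  exists (mkposreal _ Hpow). intros t Ht Htpos.
  apply (proj1 (Rabs_lt_between' _ _ _)) in Ht. simpl in Ht.
  change (Rabs (nth_root n t - 0) < eps).
  rewrite Rminus_0_r, Rabs_right by (left; apply nth_root_pos).
  rewrite <- (nth_root_of_pow n eps Hn (cond_pos eps)).
  apply nth_root_lt; [exact Hn | lra].
Qed.

Lemma nth_root_p_infty (n : nat) :
  (0 < n)%nat -> filterlim (nth_root n) (Rbar_locally p_infty) (Rbar_locally p_infty).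
Proof.
  intros Hn P [M HM]. set (M' := Rmax M 1).
  assert (HM' : 0 < M') by (unfold M'; pose proof (Rmax_r M 1); lra).
  exists (M' ^ n). intros t Ht. apply HM.
  assert (0 < M' ^ n) by now apply pow_lt.
  apply Rle_lt_trans with M'; [apply Rmax_l |].
  rewrite <- (nth_root_of_pow n M' Hn HM'). apply nth_root_lt; [exact Hn | lra].
Qed.

Definition moment_integrand (m : nat) (x : R) : R := x ^ (2 * m) * exp (- x ^ 6).

Definition gamma_integrand (s t : R) : R := Rpower t (s - 1) * exp (- t).

Section Moment.

Variable m : nat.

Let f := moment_integrand m.

Let Phi (b : R) : R := RInt f 0 b.

Lemma continuous_moment_integrand (x : R) : continuous f x.
Proof. apply continuous_of_ex_derive. unfold f, moment_integrand. auto_derive. auto. Qed.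

Lemma moment_integrand_nonneg (x : R) : 0 <= f x.
Proof.
  unfold f, moment_integrand. rewrite pow_mult.
  apply Rmult_le_pos; [apply pow_le, pow2_ge_0 | left; apply exp_pos].
Qed.

Lemma moment_integrand_even (x : R) : f (- x) = f x.
Proof.
  unfold f, moment_integrand. replace 6%nat with (2 * 3)%nat by reflexivity.
  rewrite !pow_mult. replace ((- x) ^ 2) with (x ^ 2) by ring. reflexivity.
Qed.

Lemma ex_RInt_moment_integrand (a b : R) : ex_RInt f a b.
Proof. apply ex_RInt_of_continuous, continuous_moment_integrand. Qed.

Lemma RInt_moment_integrand_primitive (a b : R) : RInt f a b = Phi b - Phi a.
Proof.
  unfold Phi.
  assert (HChasles := RInt_Chasles f 0 a b (ex_RInt_moment_integrand 0 a)
                                           (ex_RInt_moment_integrand a b)).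
  change (RInt f 0 a + RInt f a b = RInt f 0 b) in HChasles. lra.
Qed.

Lemma moment_primitive_odd (b : R) : Phi (- b) = - Phi b.
Proof.
  unfold Phi.
  assert (Hopp := RInt_comp_lin f (-1) 0 0 b ltac:(apply ex_RInt_moment_integrand)).
  replace (-1 * 0 + 0) with 0 in Hopp by ring. replace (-1 * b + 0) with (- b) in Hopp by ring.
  rewrite <- Hopp, <- (RInt_opp (V := R_CompleteNormedModule)) by apply ex_RInt_moment_integrand.
  apply RInt_ext. intros x _. unfold scal; simpl; unfold mult; simpl.
  replace (-1 * x + 0) with (- x) by ring. rewrite moment_integrand_even. unfold opp; simpl. ring.
Qed.

Lemma moment_primitive_limit : exists L, filterlim Phi (Rbar_locally p_infty) (locally L).
Proof.
  assert (Hmono : forall a b, a <= b -> Phi a <= Phi b).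
  { intros a b Hab. assert (Hint : 0 <= RInt f a b).
    { apply RInt_ge_0; [exact Hab | apply ex_RInt_moment_integrand |].
      intros; apply moment_integrand_nonneg. }
    rewrite RInt_moment_integrand_primitive in Hint. lra. }
  destruct (poly_exp_decay m 0 0) as [K [HK Hdecay]]; [lra | lra |].
  apply (nondecreasing_bounded_limit _ (K * PI) Hmono). intros b.
  apply Rle_trans with (Phi (Rabs b)); [apply Hmono, Rle_abs |].
  apply RInt_le_of_decay; [apply Rabs_pos | exact HK | apply continuous_moment_integrand |].
  intros x. specialize (Hdecay x). unfold f, moment_integrand.
  replace (- x ^ 6) with (- x ^ 6 + 0 * x ^ 4 + 0 * x ^ 2) by ring. exact Hdecay.
Qed.

Let s := (2 * INR m + 1) / 6.

Lemma continuous_gamma_integrand (t : R) : 0 < t -> continuous (gamma_integrand s) t.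
Proof.
  intros Ht. apply continuous_of_ex_derive. unfold gamma_integrand, Rpower. auto_derive. exact Ht.
Qed.

Lemma gamma_integrand_pow6 (y : R) : 0 < y -> 6 * y ^ 5 * gamma_integrand s (y ^ 6) = 6 * f y.
Proof.
  intros Hy. unfold gamma_integrand, f, moment_integrand, s.
  rewrite <- (Rpower_pow 6 y Hy), Rpower_mult, <- (Rpower_pow 5 y Hy).
  replace (y ^ (2 * m)) with (Rpower y (INR 5 + INR 6 * ((2 * INR m + 1) / 6 - 1))).
  - rewrite Rpower_plus. ring.
  - rewrite <- Rpower_pow by exact Hy. f_equal. rewrite mult_INR. simpl. field.
Qed.

Lemma is_RInt_gamma_integrand_pow6 (a b : R) : 0 < a -> 0 < b ->
  is_RInt (gamma_integrand s) (a ^ 6) (b ^ 6) (6 * RInt f a b).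
Proof.
  intros Ha Hb.
  assert (Hpos : forall x, Rmin a b <= x <= Rmax a b -> 0 < x).
  { intros x [Hx _]. apply Rlt_le_trans with (Rmin a b); [now apply Rmin_glb_lt | exact Hx]. }
  assert (Hex : ex_RInt (gamma_integrand s) (a ^ 6) (b ^ 6)).
  { apply (ex_RInt_continuous (V := R_CompleteNormedModule)). intros t [Ht _].
    apply continuous_gamma_integrand.
    apply Rlt_le_trans with (Rmin (a ^ 6) (b ^ 6)); [| exact Ht].
    apply Rmin_glb_lt; now apply pow_lt. }
  assert (Hcomp : is_RInt (fun y => scal (6 * y ^ 5) (gamma_integrand s (y ^ 6))) a b
                          (RInt (gamma_integrand s) (a ^ 6) (b ^ 6))).
  { apply (is_RInt_comp (V := R_CompleteNormedModule) _ (fun y => y ^ 6)).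
    - intros x Hx. now apply continuous_gamma_integrand, pow_lt, Hpos.
    - intros x _. split; [auto_derive; [exact I | ring] |].
      apply continuous_of_ex_derive. auto_derive. exact I. }
  replace (6 * RInt f a b) with (RInt (gamma_integrand s) (a ^ 6) (b ^ 6));
    [now apply (RInt_correct (V := R_CompleteNormedModule)) |].
  rewrite <- (is_RInt_unique _ _ _ _ Hcomp). apply (is_RInt_unique (V := R_CompleteNormedModule)).
  apply (is_RInt_ext (fun y => scal 6 (f y))).
  - intros x Hx. unfold scal; simpl; unfold mult; simpl.
    symmetry. apply gamma_integrand_pow6, Hpos. lra.
  - apply (is_RInt_scal (V := R_NormedModule)), (RInt_correct (V := R_CompleteNormedModule)).
    apply ex_RInt_moment_integrand.
Qed.

Lemma RInt_gamma_integrand_nth_root (t : R) : 0 < t ->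
  ex_RInt (gamma_integrand s) 1 t /\
  RInt (gamma_integrand s) 1 t = 6 * (Phi (nth_root 6 t) - Phi 1).
Proof.
  intros Ht.
  assert (Hsubst := is_RInt_gamma_integrand_pow6 1 (nth_root 6 t) Rlt_0_1 (nth_root_pos 6 t)).
  rewrite pow1, nth_root_pow in Hsubst by (lia || exact Ht).
  split; [now exists (6 * RInt f 1 (nth_root 6 t)) |].
  rewrite (is_RInt_unique _ _ _ _ Hsubst), RInt_moment_integrand_primitive. reflexivity.
Qed.

Lemma is_RInt_gen_gamma_integrand (L : R) :
  filterlim Phi (Rbar_locally p_infty) (locally L) ->
  is_RInt_gen (gamma_integrand s) (at_right 0) (Rbar_locally p_infty) (6 * L).
Proof.
  intros HL. pose proof RInt_gamma_integrand_nth_root as HG.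
  assert (Hinf : is_RInt_gen (gamma_integrand s) (at_point 1) (Rbar_locally p_infty)
                             (6 * (L - Phi 1))).
  { apply is_RInt_gen_at_point_l;
      [apply Rbar_locally_filter | exists 0; intros t Ht; now apply HG |].
    apply (filterlim_ext_loc (fun t => 6 * (Phi (nth_root 6 t) - Phi 1))).
    { exists 0. intros t Ht. symmetry. now apply HG. }
    apply (filterlim_comp _ _ _ (fun t => Phi (nth_root 6 t)) (fun u => 6 * (u - Phi 1))
             _ (locally L)); [| apply continuous_affine].
    apply (filterlim_comp _ _ _ (nth_root 6) Phi _ (Rbar_locally p_infty)); [| exact HL].
    apply nth_root_p_infty. lia. }
  assert (Hzero : is_RInt_gen (gamma_integrand s) (at_point 1) (at_right 0) (6 * (Phi 0 - Phi 1))).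
  { assert (Hright : at_right 0 (fun t => 0 < t)) by (exists (mkposreal 1 Rlt_0_1); now intros).
    apply is_RInt_gen_at_point_l; [apply at_right_proper_filter | |].
    { apply (filter_imp _ _ (fun t Ht => proj1 (HG t Ht)) Hright). }
    apply (filterlim_ext_loc (fun t => 6 * (Phi (nth_root 6 t) - Phi 1))).
    { apply (filter_imp _ _ (fun t Ht => eq_sym (proj2 (HG t Ht))) Hright). }
    apply (filterlim_comp _ _ _ (fun t => Phi (nth_root 6 t)) (fun u => 6 * (u - Phi 1))
             _ (locally (Phi 0))); [| apply continuous_affine].
    apply (filterlim_comp _ _ _ (nth_root 6) Phi _ (locally 0)); [apply nth_root_at_right_0; lia |].
    apply (continuous_RInt_0 f 0 Phi). apply filter_forall. intros b.
    apply (RInt_correct (V := R_CompleteNormedModule)), ex_RInt_moment_integrand. }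
  apply is_RInt_gen_swap in Hzero.
  replace (6 * L) with (plus (opp (6 * (Phi 0 - Phi 1))) (6 * (L - Phi 1)));
    [exact (is_RInt_gen_Chasles _ _ _ _ Hzero Hinf) |].
  unfold Phi. rewrite RInt_point. unfold plus, opp, zero; simpl. ring.
Qed.

Lemma is_RInt_gen_moment_integrand :
  is_RInt_gen f (Rbar_locally m_infty) (Rbar_locally p_infty) (Gamma s / 3).
Proof.
  destruct moment_primitive_limit as [L HL].
  assert (HGamma : Gamma s = 6 * L).
  { apply (is_RInt_gen_unique (Fa := at_right 0) (Fb := Rbar_locally p_infty)).
    now apply is_RInt_gen_gamma_integrand. }
  assert (Hex : forall F, Filter F -> F (fun b => ex_RInt f 0 b))
    by (intros F FF; apply filter_forall, ex_RInt_moment_integrand).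
  assert (Hp : is_RInt_gen f (at_point 0) (Rbar_locally p_infty) L)
    by (apply is_RInt_gen_at_point_l;
          [apply Rbar_locally_filter | apply Hex, Rbar_locally_filter | exact HL]).
  assert (Hm : is_RInt_gen f (at_point 0) (Rbar_locally m_infty) (opp L)).
  { apply is_RInt_gen_at_point_l; [apply Rbar_locally_filter | apply Hex, Rbar_locally_filter |].
    apply (filterlim_ext (fun a => opp (Phi (- a)))).
    { intros a. rewrite moment_primitive_odd. apply Ropp_involutive. }
    apply (filterlim_comp _ _ _ (fun a => Phi (- a)) opp _ (locally L));
      [| apply (filterlim_opp (V := R_NormedModule))].
    apply (filterlim_comp _ _ _ Ropp Phi _ (Rbar_locally p_infty)); [| exact HL].
    apply (filterlim_Rbar_opp m_infty). }
  apply is_RInt_gen_swap in Hm.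
  replace (Gamma s / 3) with (plus (opp (opp L)) L); [exact (is_RInt_gen_Chasles _ _ _ _ Hm Hp) |].
  rewrite HGamma. unfold plus, opp; simpl. field.
Qed.

End Moment.

(** * Laguerre coefficients *)

Lemma pochhammer_pos (a : R) (k : nat) : 0 < a -> 0 < pochhammer a k.
Proof.
  intros Ha. induction k as [| k IH]; simpl; [lra |].
  apply Rmult_lt_0_compat; [exact IH | pose proof (pos_INR k); lra].
Qed.

Lemma pochhammer_add (a : R) (i k : nat) :
  pochhammer a (i + k) = pochhammer a i * pochhammer (a + INR i) k.
Proof.
  induction k as [| k IH]; simpl.
  - rewrite Nat.add_0_r. ring.
  - rewrite Nat.add_succ_r. simpl. rewrite IH, plus_INR. ring.
Qed.

Lemma fact_double (i : nat) : INR (fact (2 * i)) = 4 ^ i * INR (fact i) * pochhammer (1/2) i.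
Proof.
  induction i as [| i IH]; [simpl; ring |].
  replace (2 * S i)%nat with (S (S (2 * i))) by lia.
  rewrite !fact_simpl, !mult_INR, IH. simpl pochhammer. simpl pow.
  rewrite !S_INR, mult_INR. simpl INR. field.
Qed.

Lemma fact_double_succ (i : nat) :
  INR (fact (2 * i + 1)) = 4 ^ i * INR (fact i) * pochhammer (3/2) i.
Proof.
  induction i as [| i IH]; [simpl; ring |].
  replace (2 * S i + 1)%nat with (S (S (2 * i + 1))) by lia.
  rewrite !fact_simpl, !mult_INR, IH. simpl pochhammer. simpl pow.
  rewrite !S_INR, plus_INR, mult_INR. simpl INR. field.
Qed.

Lemma laguerre_pochhammer (j : nat) (alpha x : R) : -1 < alpha ->
  laguerre j alpha x = pochhammer (alpha + 1) j *
    sum_f_R0 (fun i => (- x) ^ i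
                       / (INR (fact (j - i)) * INR (fact i) * pochhammer (alpha + 1) i)) j.
Proof.
  intros Halpha. unfold laguerre. rewrite sum_n_Reals, scal_sum. apply sum_eq. intros i Hi.
  set (k := (j - i)%nat). replace j with (i + k)%nat by (unfold k; lia).
  rewrite pochhammer_add. replace (alpha + INR i + 1) with (alpha + 1 + INR i) by ring.
  replace (- x) with (-1 * x) by ring. rewrite Rpow_mult_distr.
  assert (0 < pochhammer (alpha + 1) i) by (apply pochhammer_pos; lra).
  pose proof (INR_fact_pos i). pose proof (INR_fact_pos k).
  field. lra.
Qed.

Lemma zeta_pow (tau kappa : R) (i : nat) :
  tau ^ i * (- (- (1/4) * kappa ^ 2 * tau ^ 3)) ^ i * 4 ^ i = (- (kappa * tau ^ 2)) ^ (2 * i).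
Proof. rewrite pow_mult, <- !Rpow_mult_distr. f_equal. field. Qed.

Lemma laguerre_mhalf_coef (tau kappa : R) (j : nat) :
  tau ^ j * laguerre j (- (1/2)) (- (1/4) * kappa ^ 2 * tau ^ 3) / pochhammer (1/2) j =
  sum_f_R0 (fun i => exp_term (j - i) tau * exp_term (2 * i) (- (kappa * tau ^ 2))) j.
Proof.
  rewrite laguerre_pochhammer by lra. replace (- (1/2) + 1) with (1/2) by field.
  assert (0 < pochhammer (1/2) j) by (apply pochhammer_pos; lra).
  replace (tau ^ j * (pochhammer (1/2) j * sum_f_R0 _ j) / pochhammer (1/2) j)
    with (tau ^ j * sum_f_R0 (fun i => (- (- (1/4) * kappa ^ 2 * tau ^ 3)) ^ i /
            (INR (fact (j - i)) * INR (fact i) * pochhammer (1/2) i)) j) by (field; lra).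
  rewrite scal_sum. apply sum_eq. intros i Hi.
  set (k := (j - i)%nat). replace j with (i + k)%nat by (unfold k; lia).
  unfold exp_term. rewrite <- zeta_pow, fact_double, pow_add.
  assert (0 < pochhammer (1/2) i) by (apply pochhammer_pos; lra).
  pose proof (INR_fact_pos i). pose proof (INR_fact_pos k). pose proof (pow_lt 4 i ltac:(lra)).
  field. lra.
Qed.

Lemma laguerre_half_coef (tau kappa : R) (j : nat) :
  - kappa * tau ^ (j + 2) * laguerre j (1/2) (- (1/4) * kappa ^ 2 * tau ^ 3) / pochhammer (3/2) j =
  sum_f_R0 (fun i => exp_term (j - i) tau * exp_term (2 * i + 1) (- (kappa * tau ^ 2))) j.
Proof.
  rewrite laguerre_pochhammer by lra. replace (1/2 + 1) with (3/2) by field.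
  assert (0 < pochhammer (3/2) j) by (apply pochhammer_pos; lra).
  replace (- kappa * tau ^ (j + 2) * (pochhammer (3/2) j * sum_f_R0 _ j) / pochhammer (3/2) j)
    with (- kappa * tau ^ (j + 2) * sum_f_R0 (fun i => (- (- (1/4) * kappa ^ 2 * tau ^ 3)) ^ i /
            (INR (fact (j - i)) * INR (fact i) * pochhammer (3/2) i)) j) by (field; lra).
  rewrite scal_sum. apply sum_eq. intros i Hi.
  set (k := (j - i)%nat). replace j with (i + k)%nat by (unfold k; lia).
  unfold exp_term. rewrite (pow_add _ (2 * i) 1), <- zeta_pow, fact_double_succ, !pow_add.
  assert (0 < pochhammer (3/2) i) by (apply pochhammer_pos; lra).
  pose proof (INR_fact_pos i). pose proof (INR_fact_pos k). pose proof (pow_lt 4 i ltac:(lra)).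
  field. lra.
Qed.

(** * Termwise integration *)

Lemma exp_term_scale (k p : nat) (c t : R) : exp_term k (c * t ^ p) = exp_term k c * t ^ (p * k).
Proof. unfold exp_term. rewrite Rpow_mult_distr, pow_mult. unfold Rdiv. ring. Qed.

Lemma exp_prod_term_scale (j : nat) (c1 c2 t : R) :
  exp_prod_term j (c1 * t ^ 2) (c2 * t ^ 1) =
  t ^ (2 * j) * sum_f_R0 (fun i => exp_term (j - i) c1 * exp_term (2 * i) c2) j
  + t ^ (2 * j + 1) * sum_f_R0 (fun i => exp_term (j - i) c1 * exp_term (2 * i + 1) c2) j.
Proof.
  unfold exp_prod_term, exp_pair. rewrite !scal_sum, <- plus_sum. apply sum_eq. intros i Hi.
  rewrite !exp_term_scale.
  replace (2 * j)%nat with (2 * (j - i) + 1 * (2 * i))%nat by lia.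
  replace (2 * (j - i) + 1 * (2 * i) + 1)%nat with (2 * (j - i) + 1 * (2 * i + 1))%nat by lia.
  rewrite !pow_add. ring.
Qed.

Section MuApprox.

Variables (n : nat) (tau kappa : R).

Let zeta := - (1/4) * kappa ^ 2 * tau ^ 3.

Let even_coef (j : nat) := tau ^ j * laguerre j (- (1/2)) zeta / pochhammer (1/2) j.

Let odd_coef (j : nat) := - kappa * tau ^ (j + 2) * laguerre j (1/2) zeta / pochhammer (3/2) j.

(* [y = tau x^4] and [z = - kappa tau^2 x^2] are written as polynomials in [x^2], the shape
   expected by [exp_prod_term_scale]. *)
Definition mu_approx_term (j : nat) (x : R) : R :=
  x ^ (2 * n) * exp (- x ^ 6)
  * exp_prod_term j (tau * (x ^ 2) ^ 2) (- (kappa * tau ^ 2) * (x ^ 2) ^ 1).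

Definition mu_approx (J : nat) (x : R) : R := sum_f_R0 (fun j => mu_approx_term j x) J.

Lemma mu_approx_term_moments (j : nat) (x : R) :
  mu_approx_term j x =
  even_coef j * moment_integrand (n + 2 * j) x + odd_coef j * moment_integrand (n + 2 * j + 1) x.
Proof.
  unfold mu_approx_term, moment_integrand, even_coef, odd_coef, zeta.
  rewrite exp_prod_term_scale, laguerre_mhalf_coef, laguerre_half_coef, <- !pow_mult.
  replace (2 * (n + 2 * j))%nat with (2 * n + 2 * (2 * j))%nat by lia.
  replace (2 * (n + 2 * j + 1))%nat with (2 * n + 2 * (2 * j + 1))%nat by lia.
  rewrite !pow_add. ring.
Qed.

Lemma is_RInt_gen_mu_approx_term (j : nat) :
  is_RInt_gen (mu_approx_term j) (Rbar_locally m_infty) (Rbar_locally p_infty)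
    (mu_term n tau kappa j / 3).
Proof.
  apply (is_RInt_gen_ext (fun x => plus (scal (even_coef j) (moment_integrand (n + 2 * j) x))
                                        (scal (odd_coef j) (moment_integrand (n + 2 * j + 1) x)))).
  { apply filter_forall. intros ab x _. symmetry. apply mu_approx_term_moments. }
  replace (mu_term n tau kappa j / 3) with
    (even_coef j * (Gamma ((2 * INR (n + 2 * j) + 1) / 6) / 3)
     + odd_coef j * (Gamma ((2 * INR (n + 2 * j + 1) + 1) / 6) / 3)).
  - exact (is_RInt_gen_plus _ _ _ _
             (is_RInt_gen_scal _ (even_coef j) _ (is_RInt_gen_moment_integrand _))
             (is_RInt_gen_scal _ (odd_coef j) _ (is_RInt_gen_moment_integrand _))).
  - unfold mu_term, even_coef, odd_coef, zeta. cbv zeta.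
    replace ((2 * INR (n + 2 * j) + 1) / 6) with (2 / 3 * INR j + 1 / 3 * INR n + 1 / 6)
      by (rewrite plus_INR, mult_INR; simpl; field).
    replace ((2 * INR (n + 2 * j + 1) + 1) / 6) with (2 / 3 * INR j + 1 / 3 * INR n + 1 / 2)
      by (rewrite !plus_INR, mult_INR; simpl; field).
    assert (0 < pochhammer (1/2) j) by (apply pochhammer_pos; lra).
    assert (0 < pochhammer (3/2) j) by (apply pochhammer_pos; lra).
    field. lra.
Qed.

End MuApprox.

Lemma continuous_mu_approx (n : nat) (tau kappa : R) (J : nat) (x : R) :
  continuous (mu_approx n tau kappa J) x.
Proof.
  apply continuous_sum_f_R0. intros j.
  eapply continuous_ext; [intros y; symmetry; apply mu_approx_term_moments |].
  apply continuous_of_ex_derive. unfold moment_integrand. auto_derive. exact I.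
Qed.

Lemma continuous_mu_integrand (n : nat) (tau kappa x : R) : continuous (mu_integrand n tau kappa) x.
Proof. apply continuous_of_ex_derive. unfold mu_integrand. auto_derive. exact I. Qed.

Definition mu_majorant (n : nat) (tau kappa x : R) : R :=
  x ^ (2 * n) * exp (- x ^ 6 + 2 * Rabs tau * x ^ 4 + 2 * (Rabs kappa * tau ^ 2) * x ^ 2).

Lemma mu_approx_error (n : nat) (tau kappa : R) (J : nat) (x : R) :
  Rabs (mu_integrand n tau kappa x - mu_approx n tau kappa J x)
  <= 3 * (1/2) ^ J * mu_majorant n tau kappa x.
Proof.
  set (y := tau * (x ^ 2) ^ 2). set (z := - (kappa * tau ^ 2) * (x ^ 2) ^ 1).
  set (c := x ^ (2 * n) * exp (- x ^ 6)).
  assert (Hc : 0 <= c).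
  { unfold c. rewrite pow_mult.
    apply Rmult_le_pos; [apply pow_le, pow2_ge_0 | left; apply exp_pos]. }
  assert (Hf : mu_integrand n tau kappa x = c * (exp y * exp z)).
  { unfold mu_integrand, c. rewrite (Rmult_assoc (x ^ (2 * n))), <- !exp_plus.
    do 2 f_equal. unfold y, z. ring. }
  assert (Hg : mu_approx n tau kappa J x = c * sum_f_R0 (fun j => exp_prod_term j y z) J).
  { unfold mu_approx, mu_approx_term. rewrite scal_sum.
    apply sum_eq. intros. unfold c, y, z. ring. }
  assert (Hmaj : mu_majorant n tau kappa x = c * exp (2 * Rabs y + 2 * Rabs z)).
  { unfold mu_majorant, c, y, z. rewrite (Rmult_assoc (x ^ (2 * n))), <- exp_plus. do 2 f_equal.
    rewrite !Rabs_mult, Rabs_Ropp, Rabs_mult, (Rabs_right ((x ^ 2) ^ 2)),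
      (Rabs_right ((x ^ 2) ^ 1)), (Rabs_right (tau ^ 2))
      by (apply Rle_ge; (apply pow_le, pow2_ge_0 || apply pow2_ge_0)).
    ring. }
  rewrite Hf, Hg, Hmaj, <- Rmult_minus_distr_l, Rabs_mult, (Rabs_right c) by lra.
  replace (3 * (1/2) ^ J * (c * exp (2 * Rabs y + 2 * Rabs z)))
    with (c * (3 * (1/2) ^ J * exp (2 * Rabs y + 2 * Rabs z))) by ring.
  apply Rmult_le_compat_l; [exact Hc | apply exp_prod_error].
Qed.

Lemma RInt_mu_approx_error (n : nat) (tau kappa : R) : exists C,
  forall J a b, a <= b ->
    Rabs (RInt (mu_integrand n tau kappa) a b - RInt (mu_approx n tau kappa J) a b)
    <= (1/2) ^ J * C.
Proof.
  destruct (poly_exp_decay n (2 * Rabs tau) (2 * (Rabs kappa * tau ^ 2))) as [K [HK Hdecay]].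
  { pose proof (Rabs_pos tau). lra. }
  { pose proof (Rabs_pos kappa). pose proof (pow2_ge_0 tau). nra. }
  exists (3 * (K * PI)). intros J a b Hab.
  set (f := mu_integrand n tau kappa). set (g := mu_approx n tau kappa J).
  set (h := mu_majorant n tau kappa).
  assert (Hf : forall x, continuous f x) by apply continuous_mu_integrand.
  assert (Hg : forall x, continuous g x) by apply continuous_mu_approx.
  assert (Hh : forall x, continuous h x).
  { intros x. apply continuous_of_ex_derive. unfold h, mu_majorant. auto_derive. exact I. }
  assert (Hfg : forall x, continuous (fun y => f y - g y) x)
    by (intros x; apply (continuous_minus (V := R_NormedModule)); auto).
  rewrite <- (RInt_minus (V := R_CompleteNormedModule)) by now apply ex_RInt_of_continuous.
  eapply Rle_trans; [apply abs_RInt_le; [exact Hab | now apply ex_RInt_of_continuous] |].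
  eapply Rle_trans; [apply (RInt_le _ (fun x => scal (3 * (1/2) ^ J) (h x))) |].
  - exact Hab.
  - apply ex_RInt_of_continuous. intros x.
    apply (continuous_comp (fun y => f y - g y) Rabs); [apply Hfg | apply continuous_Rabs].
  - apply ex_RInt_of_continuous. intros x. apply (continuous_scal_r (V := R_NormedModule)), Hh.
  - intros x _. apply mu_approx_error.
  - rewrite (RInt_scal (V := R_CompleteNormedModule)) by now apply ex_RInt_of_continuous.
    unfold scal; simpl; unfold mult; simpl.
    assert (RInt h a b <= K * PI) by (now apply RInt_le_of_decay).
    assert (0 <= (1/2) ^ J) by (apply pow_le; lra).
    nra.
Qed.

Theorem theorem6p12 (tau kappa : R) (n : nat) :
  exists S : R,
    is_series (mu_term n tau kappa) S /\
    is_RInt_gen (mu_integrand n tau kappa)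
      (Rbar_locally m_infty) (Rbar_locally p_infty) (1 / 3 * S).
Proof.
  destruct (RInt_mu_approx_error n tau kappa) as [C Herror].
  destruct (is_RInt_gen_approx (Fa := Rbar_locally m_infty) (Fb := Rbar_locally p_infty)
              (mu_integrand n tau kappa) (mu_approx n tau kappa)
              (sum_f_R0 (fun j => mu_term n tau kappa j / 3)) (fun J => (1/2) ^ J * C))
    as [l [Hseries Hintegral]].
  - intros a b. apply ex_RInt_of_continuous, continuous_mu_integrand.
  - intros J. exact (is_RInt_gen_sum_f_R0 _ _ _ _ J (is_RInt_gen_mu_approx_term n tau kappa)).
  - apply is_lim_seq_half_pow_mult.
  - exact Herror.
  - exact filter_prod_m_infty_p_infty_le.
  - exists (3 * l). split.
    + change (is_lim_seq (sum_n (mu_term n tau kappa)) (3 * l)).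
      apply (is_lim_seq_ext (fun J => 3 * sum_f_R0 (fun j => mu_term n tau kappa j / 3) J)).
      { intros J. rewrite sum_n_Reals, scal_sum. apply sum_eq. intros; field. }
      exact (is_lim_seq_mult' (fun _ => 3) _ 3 l (is_lim_seq_const 3) Hseries).
    + replace (1 / 3 * (3 * l)) with l by field. exact Hintegral.
Qed.
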